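(* In the analytical model described in the context, assume $\max(T_1,T_2)>1$. For $U\in\{0,\dots,N_1-1\}$ and $\beta>0$ let $F(U,\beta)=b(U,T_1,T_2)\,\beta^{\min\{N_1-U,N_2\}}$. Define $U^*=N_1-N_2-1$ if $\mathcal A_2b_2(N_1-N_2-1,T_1,T_2)<\mathcal A_1b_1(N_1-N_2,T_1,T_2)+\mathcal A_2b_2(N_1-N_2,T_1,T_2)$, and $U^*=N_1-N_2$ otherwise. Then there exists $\bar\beta>0$ such that for all $\beta\in(0,\bar\beta)$, $U^*$ minimizes $F(\cdot,\beta)$ over $\{0,1,\dots,N_1-1\}$.
   Context: Parameters: integers $N_1>N_2\ge1$, $P_1,P_2>0$, $\alpha_1,\alpha_2>2$, $\lambda_1,\lambda_2>0$, $T_1,T_2\ge1$; $U$ ranges over $\{0,\dots,N_1-1\}$. $\mathcal A_1=2\pi\lambda_1\int_0^\infty z e^{-\pi\lambda_1z^2}\exp(-\pi\lambda_2(P_2/P_1)^{2/\alpha_2}z^{2\alpha_1/\alpha_2})dz$, $\mathcal A_2=2\pi\lambda_2\int_0^\infty z e^{-\pi\lambda_2z^2}\exp(-\pi\lambda_1(P_1/P_2)^{2/\alpha_1}z^{2\alpha_2/\alpha_1})dz$, $f_{Y_1}(y)=\frac{2\pi\lambda_1}{\mathcal A_1}y\exp(-\pi(\lambda_1y^2+\lambda_2(P_2/P_1)^{2/\alpha_2}y^{2\alpha_1/\alpha_2}))$, $f_{Y_2}(y)=\frac{2\pi\lambda_2}{\mathcal A_2}y\exp(-\pi(\lambda_1(P_1/P_2)^{2/\alpha_1}y^{2\alpha_2/\alpha_1}+\lambda_2y^2))$.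 $\bar L_j(T_j)=2\pi\lambda_j\int_0^\infty r\int_{(P_j/(P_1T_j))^{1/\alpha_j}r^{\alpha_1/\alpha_j}}^{(P_j/P_1)^{1/\alpha_j}r^{\alpha_1/\alpha_j}}f_{Y_j}(y)dy\,dr$, $\bar L=\bar L_1(T_1)+\bar L_2(T_2)$; $K_0\sim$ Poisson($\bar L$), $u_{\mathrm{IN},0}=\min(U,K_0)$; $p_c(U)=e^{-\bar L}(\sum_{k=0}^{U-1}\frac{\bar L^k}{k!}+U\sum_{k\ge U}\frac{\bar L^k}{(k+1)!})$, $p_{\bar c}=1-p_c$. $\mathcal N_n=\{(n_1,n_2,n_3)\in\mathbb N_0^3:\sum n_i=n\}$, $\mathcal M_n=\{(m_a)_{a=1}^n\in\mathbb N_0^n:\sum_a a\,m_a=n\}$. With $U_1=U$, $Q_1=\Pr(u_{\mathrm{IN},0}=U)$, $U_2=0$, $Q_2=1$, for $j=1,2$ $$b_j(U,T_1,T_2)=Q_j\!\!\sum_{(n_1,n_2,n_3)\in\mathcal N_{N_j-U_j}}\sum_{(m_a)\in\mathcal M_{n_1}}\sum_{(p_a)\in\mathcal M_{n_2}}\sum_{(q_a)\in\mathcal M_{n_3}}\Big(\int_0^\infty y^{\frac{2\alpha_j}{\alpha_1}(\sum m_a+\sum p_a)+\frac{2\alpha_j}{\alpha_2}\sum q_a}f_{Y_j}(y)dy\Big)\prod_{a=1}^{n_1}\frac1{m_a!}\Big(\tfrac{2\pi\lambda_1}{\alpha_1(a-2/\alpha_1)}(\tfrac{P_1}{P_j})^{2/\alpha_1}p_{\bar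 c}(1-T_j^{-(a-2/\alpha_1)})\Big)^{m_a}\prod_{a=1}^{n_2}\frac1{p_a!}\Big(\tfrac{2\pi\lambda_1}{\alpha_1(a-2/\alpha_1)}(\tfrac{P_1}{P_j})^{2/\alpha_1}T_j^{-(a-2/\alpha_1)}\Big)^{p_a}\prod_{a=1}^{n_3}\frac1{q_a!}\Big(\tfrac{2\pi\lambda_2}{\alpha_2(a-2/\alpha_2)}(\tfrac{P_2}{P_j})^{2/\alpha_2}\Big)^{q_a},$$ and $b(U,T_1,T_2)=\mathcal A_2b_2$ if $U<N_1-N_2$, $\mathcal A_1b_1+\mathcal A_2b_2$ if $U=N_1-N_2$, $\mathcal A_1b_1$ if $U>N_1-N_2$. (In the paper's model $b(U,T_1,T_2)\beta^{\min\{N_1-U,N_2\}}$ is the small-$\beta$ asymptotic of the outage probability of a user-centric interference-nulling scheme with maximum nulling degrees of freedom $U$.) *)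

From Stdlib Require Import Reals List Arith.
From Coquelicot Require Import Coquelicot.
Import ListNotations.
Open Scope R_scope.

Record params := Params {
  N1 : nat; N2 : nat;
  P1 : R; P2 : R;
  al1 : R; al2 : R;    (* path-loss exponents alpha_1, alpha_2 *)
  lam1 : R; lam2 : R;  (* densities lambda_1, lambda_2 *)
  T1 : R; T2 : R
}.

(** Real power x^y; all exponents used below are > 0, and for x = 0 we use 0^y = 0. *)
Definition rpow (x y : R) : R := if Rlt_dec 0 x then Rpower x y else 0.

Definition Iinf (f : R -> R) : R := RInt_gen f (at_point 0) (Rbar_locally p_infty).

Definition fsum (n : nat) (f : nat -> R) : R :=
  fold_right (fun k acc => f k + acc) 0 (seq 0 n).

Section Model.
Variable p : params.

Definition A1 : R :=
  2 * PI * lam1 p * Iinf (fun z => z * exp (- PI * lam1 p * z ^ 2)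
     * exp (- PI * lam2 p * rpow (P2 p / P1 p) (2 / al2 p) * rpow z (2 * al1 p / al2 p))).

Definition A2 : R :=
  2 * PI * lam2 p * Iinf (fun z => z * exp (- PI * lam2 p * z ^ 2)
     * exp (- PI * lam1 p * rpow (P1 p / P2 p) (2 / al1 p) * rpow z (2 * al2 p / al1 p))).

Definition fY1 (y : R) : R :=
  2 * PI * lam1 p / A1 * y
  * exp (- PI * (lam1 p * y ^ 2 + lam2 p * rpow (P2 p / P1 p) (2 / al2 p) * rpow y (2 * al1 p / al2 p))).

Definition fY2 (y : R) : R :=
  2 * PI * lam2 p / A2 * y
  * exp (- PI * (lam1 p * rpow (P1 p / P2 p) (2 / al1 p) * rpow y (2 * al2 p / al1 p) + lam2 p * y ^ 2)).

Definition Lbar_gen (Pj aj lj : R) (fY : R -> R) (T : R) : R :=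
  2 * PI * lj * Iinf (fun r => r *
     RInt fY (rpow (Pj / (P1 p * T)) (1 / aj) * rpow r (al1 p / aj))
             (rpow (Pj / P1 p) (1 / aj) * rpow r (al1 p / aj))).

Definition Lbar1 (T : R) : R := Lbar_gen (P1 p) (al1 p) (lam1 p) fY1 T.
Definition Lbar2 (T : R) : R := Lbar_gen (P2 p) (al2 p) (lam2 p) fY2 T.
Definition Lbar : R := Lbar1 (T1 p) + Lbar2 (T2 p).

(** Poisson(Lbar) probability mass function of K0. *)
Definition poisson_pmf (k : nat) : R := exp (- Lbar) * Lbar ^ k / INR (fact k).

(** Q1 = Pr(u_IN,0 = U) with u_IN,0 = min(U, K0). *)
Definition Q1 (U : nat) : R :=
  Series (fun k => if Nat.eqb (Nat.min U k) U then poisson_pmf k else 0).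

Definition pc (U : nat) : R :=
  exp (- Lbar) * (fsum U (fun k => Lbar ^ k / INR (fact k))
    + INR U * Series (fun k => if Nat.leb U k then Lbar ^ k / INR (fact (k + 1)) else 0)).

Definition pcbar (U : nat) : R := 1 - pc U.

(** Enumeration of N_n = {(n1,n2,n3) : n1+n2+n3 = n}, each triple once. *)
Definition Nset (n : nat) : list (nat * nat * nat) :=
  flat_map (fun n1 => map (fun n2 => (n1, n2, n - n1 - n2)%nat) (seq 0 (S (n - n1))))
           (seq 0 (S n)).

Fixpoint lists_bounded (n k : nat) : list (list nat) :=
  match n with
  | O => [[]]
  | S n' => flat_map (fun x => map (cons x) (lists_bounded n' k)) (seq 0 (S k))
  end.

Fixpoint wsum_from (a : nat) (m : list nat) : nat :=
  match m with
  | [] => O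
  | x :: t => (a * x + wsum_from (S a) t)%nat
  end.

(** M_n = {(m_1,...,m_n) : sum_a a m_a = n}, encoded as lists [m_1; ...; m_n]
    (entries are necessarily <= n). *)
Definition Mset (n : nat) : list (list nat) :=
  filter (fun m => Nat.eqb (wsum_from 1 m) n) (lists_bounded n n).

Fixpoint pprod_from (a : nat) (c : nat -> R) (m : list nat) : R :=
  match m with
  | [] => 1
  | x :: t => / INR (fact x) * (c a) ^ x * pprod_from (S a) c t
  end.

Definition sumn (m : list nat) : nat := fold_right Nat.add O m.

Definition lsum {A : Type} (l : list A) (f : A -> R) : R :=
  fold_right (fun x acc => f x + acc) 0 l.

(** b_j for tier j with power Pj, exponent aj, bias Tj, pdf fY, Nj, U_j, Q_j;
    U is the nulling parameter entering through pcbar. *)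
Definition b_gen (Pj aj Tj : R) (fY : R -> R) (Nj Uj : nat) (Qj : R) (U : nat) : R :=
  let c1 := fun a : nat => 2 * PI * lam1 p / (al1 p * (INR a - 2 / al1 p))
              * rpow (P1 p / Pj) (2 / al1 p) * pcbar U
              * (1 - rpow Tj (- (INR a - 2 / al1 p))) in
  let c2 := fun a : nat => 2 * PI * lam1 p / (al1 p * (INR a - 2 / al1 p))
              * rpow (P1 p / Pj) (2 / al1 p) * rpow Tj (- (INR a - 2 / al1 p)) in
  let c3 := fun a : nat => 2 * PI * lam2 p / (al2 p * (INR a - 2 / al2 p))
              * rpow (P2 p / Pj) (2 / al2 p) in
  Qj * lsum (Nset (Nj - Uj)) (fun t =>
    let '(n1, n2, n3) := t in
    lsum (Mset n1) (fun m => lsum (Mset n2) (fun pp => lsum (Mset n3) (fun q =>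
      Iinf (fun y => rpow y (2 * aj / al1 p * INR (sumn m + sumn pp)
                             + 2 * aj / al2 p * INR (sumn q)) * fY y)
      * pprod_from 1 c1 m * pprod_from 1 c2 pp * pprod_from 1 c3 q)))).

Definition b1 (U : nat) : R := b_gen (P1 p) (al1 p) (T1 p) fY1 (N1 p) U (Q1 U) U.
Definition b2 (U : nat) : R := b_gen (P2 p) (al2 p) (T2 p) fY2 (N2 p) 0 1 U.

Definition b (U : nat) : R :=
  if Nat.ltb U (N1 p - N2 p) then A2 * b2 U
  else if Nat.eqb U (N1 p - N2 p) then A1 * b1 U + A2 * b2 U
  else A1 * b1 U.

Definition F (U : nat) (beta : R) : R := b U * beta ^ (Nat.min (N1 p - U) (N2 p)).

Definition Ustar : nat :=
  if Rlt_dec (A2 * b2 (N1 p - N2 p - 1)) (A1 * b1 (N1 p - N2 p) + A2 * b2 (N1 p - N2 p))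
  then (N1 p - N2 p - 1)%nat else (N1 p - N2 p)%nat.

End Model.

(* As beta -> 0 the term of F(U, beta) with the largest exponent min(N1 - U, N2) = N2 dominates,
   and that exponent is attained exactly for U <= N1 - N2.  For U > N1 - N2 the coefficient
   b(U) = A1 b1(U) is strictly positive: A1 > 0, every moment of Y1 is positive, and
   Pr(K0 >= U) > 0 because Lbar > 0, which is where max(T1, T2) > 1 enters.  For U < N1 - N2 the
   coefficient A2 b2(U) decreases in U, since b2 increases with p_cbar(U) and p_cbar decreases, so
   among U <= N1 - N2 the minimum sits at N1 - N2 - 1 or at N1 - N2, whichever has the smaller
   coefficient: that is U*. *)

From Pilot Require Import Defs.
From Stdlib Require Import Reals Lra Lia Psatz List Arith Classical FunctionalExtensionality.
From Coquelicot Require Import Coquelicot.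
Import Defs ListNotations.
Open Scope R_scope.

(** * Real powers *)

Lemma exp_le_mono a b : a <= b -> exp a <= exp b.
Proof. intros [H|H]; [left; apply exp_increasing; auto | subst; lra]. Qed.

Lemma rpow_nonneg x y : 0 <= rpow x y.
Proof. unfold rpow; destruct (Rlt_dec 0 x); [left; apply exp_pos | lra]. Qed.

Lemma rpow_pos x y : 0 < x -> 0 < rpow x y.
Proof. intros H; unfold rpow; destruct (Rlt_dec 0 x); [apply exp_pos | lra]. Qed.

Lemma rpow_Rpower x y : 0 < x -> rpow x y = Rpower x y.
Proof. intros H; unfold rpow; destruct (Rlt_dec 0 x); [reflexivity | lra]. Qed.

Lemma rpow_nonpos_base x y : x <= 0 -> rpow x y = 0.
Proof. intros H; unfold rpow; destruct (Rlt_dec 0 x); [lra | reflexivity]. Qed.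

Lemma rpow_le_compat_l x y e : 0 <= e -> 0 <= x <= y -> rpow x e <= rpow y e.
Proof.
  intros He [Hx Hxy]. destruct (Rlt_dec 0 x) as [H|H].
  - rewrite !rpow_Rpower by lra. apply Rle_Rpower_l; lra.
  - rewrite (rpow_nonpos_base x) by lra. apply rpow_nonneg.
Qed.

Lemma rpow_lt_compat_l x y e : 0 < e -> 0 < x < y -> rpow x e < rpow y e.
Proof. intros He [Hx Hxy]. rewrite !rpow_Rpower by lra. apply Rlt_Rpower_l; lra. Qed.

Lemma rpow_mult_distr x y e : 0 <= x -> 0 <= y -> rpow (x * y) e = rpow x e * rpow y e.
Proof.
  intros Hx Hy. destruct (Rlt_dec 0 x) as [H1|H1]; [destruct (Rlt_dec 0 y) as [H2|H2]|].
  - rewrite !rpow_Rpower by nra. symmetry; apply Rpower_mult_distr; auto.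
  - replace y with 0 by lra. rewrite Rmult_0_r, !(rpow_nonpos_base 0) by lra; ring.
  - replace x with 0 by lra. rewrite Rmult_0_l, !(rpow_nonpos_base 0) by lra; ring.
Qed.

Lemma rpow_rpow x e f : 0 <= x -> rpow (rpow x e) f = rpow x (e * f).
Proof.
  intros Hx. destruct (Rlt_dec 0 x) as [H|H].
  - rewrite !(rpow_Rpower x), rpow_Rpower by (auto; apply exp_pos).
    apply Rpower_mult.
  - rewrite !(rpow_nonpos_base x) by lra. apply rpow_nonpos_base; lra.
Qed.

Lemma rpow_1 x : 0 <= x -> rpow x 1 = x.
Proof.
  intros Hx. destruct (Rlt_dec 0 x).
  - rewrite rpow_Rpower by auto; apply Rpower_1; auto.
  - rewrite rpow_nonpos_base; lra.
Qed.

Lemma rpow_2 x : 0 <= x -> rpow x 2 = x ^ 2.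
Proof.
  intros Hx. destruct (Rlt_dec 0 x).
  - rewrite rpow_Rpower by auto. replace 2 with (INR 2) by (simpl; lra). apply Rpower_pow; auto.
  - rewrite rpow_nonpos_base by lra. replace x with 0 by lra. ring.
Qed.

(* Holds for every real [x]: both sides vanish when [x <= 0]. *)
Lemma rpow_mult_base x s : rpow x s * x = rpow x (s + 1).
Proof.
  destruct (Rlt_dec 0 x) as [H|H].
  - rewrite !rpow_Rpower, Rpower_plus, Rpower_1; auto.
  - rewrite !rpow_nonpos_base by lra. ring.
Qed.

Lemma rpow_le_1 T e : 1 <= T -> e <= 0 -> rpow T e <= 1.
Proof.
  intros HT He. rewrite rpow_Rpower by lra. unfold Rpower.
  rewrite <- exp_0. apply exp_le_mono.
  pose proof (ln_le 1 T ltac:(lra) HT). rewrite ln_1 in H. nra.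
Qed.

Lemma rpow_le_exp t r : 0 <= t -> 0 <= r -> rpow r t <= exp (t * r).
Proof.
  intros Ht Hr. destruct (Rlt_dec 0 r) as [H|H].
  - rewrite rpow_Rpower by lra. unfold Rpower. apply exp_le_mono.
    assert (ln r < r).
    { rewrite <- (ln_exp r) at 2. apply ln_increasing; auto.
      pose proof (exp_ineq1 r). lra. }
    nra.
  - rewrite rpow_nonpos_base by lra. left; apply exp_pos.
Qed.

(* Completing the square in [t r - c r^2 <= t^2/(2c) - (c/2) r^2]. *)
Lemma rpow_gauss_le t c r : 0 <= t -> 0 < c -> 0 <= r ->
  rpow r t * exp (- c * r ^ 2) <= exp (t ^ 2 / (2 * c)) * exp (- (c / 2) * r ^ 2).
Proof.
  intros Ht Hc Hr.
  eapply Rle_trans.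
  { apply Rmult_le_compat_r; [left; apply exp_pos | apply rpow_le_exp; auto]. }
  rewrite <- !exp_plus. apply exp_le_mono.
  assert (E : t * r + - c * r ^ 2 - (t ^ 2 / (2 * c) + - (c / 2) * r ^ 2)
              = - (c * r - t) ^ 2 / (2 * c)) by (field; lra).
  assert (0 <= (c * r - t) ^ 2 / (2 * c)) by (apply Rdiv_le_0_compat; [apply pow2_ge_0 | lra]).
  lra.
Qed.

Lemma continuous_rpow_0 e : 0 < e -> continuous (fun y => rpow y e) 0.
Proof.
  intros He P [eps Heps]. simpl in Heps. rewrite rpow_nonpos_base in Heps by lra.
  set (d := rpow eps (/ e)).
  assert (Hd : 0 < d) by (apply rpow_pos, cond_pos).
  exists (mkposreal d Hd). intros y Hy. apply Heps.
  change (Rabs (rpow y e - 0) < eps).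
  assert (Hy' : Rabs (y - 0) < d) by exact Hy. rewrite Rminus_0_r in Hy' |- *.
  destruct (Rlt_dec 0 y) as [Hp|Hp].
  - rewrite Rabs_pos_eq by apply rpow_nonneg. rewrite Rabs_pos_eq in Hy' by lra.
    apply Rlt_le_trans with (rpow d e); [apply rpow_lt_compat_l; lra|].
    unfold d. rewrite rpow_rpow by (left; apply cond_pos).
    replace (/ e * e) with 1 by (field; lra). rewrite rpow_1 by (left; apply cond_pos). lra.
  - rewrite rpow_nonpos_base, Rabs_R0 by lra. apply cond_pos.
Qed.

Lemma continuous_rpow e x : 0 < e -> continuous (fun y => rpow y e) x.
Proof.
  intros He. destruct (Rlt_dec 0 x) as [H|H]; [|destruct (Rlt_dec x 0) as [H'|H']].
  - apply continuous_ext_loc with (g := fun y => Rpower y e).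
    + apply locally_interval with (a := Rbar.Finite 0) (b := p_infty); simpl; auto.
      intros y Hy _. rewrite rpow_Rpower; auto.
    + apply (ex_derive_continuous (K := R_AbsRing) (V := R_NormedModule)).
      exists (e * Rpower x (e - 1)). apply is_derive_Reals, derivable_pt_lim_power; auto.
  - apply continuous_ext_loc with (g := fun _ => 0).
    + apply locally_interval with (a := m_infty) (b := Rbar.Finite 0); simpl; auto.
      intros y _ Hy. rewrite rpow_nonpos_base; lra.
    + apply continuous_const.
  - replace x with 0 by lra. apply continuous_rpow_0; auto.
Qed.

Lemma cont_mult (f g : R -> R) x :
  continuous f x -> continuous g x -> continuous (fun y => f y * g y) x.
Proof. intros; apply (continuous_mult (K := R_AbsRing) f g); auto. Qed.
Lemma cont_plus (f g : R -> R) x :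
  continuous f x -> continuous g x -> continuous (fun y => f y + g y) x.
Proof. intros; apply (continuous_plus (V := R_NormedModule) f g); auto. Qed.
Lemma cont_exp (f : R -> R) x : continuous f x -> continuous (fun y => exp (f y)) x.
Proof. intros; apply continuous_exp_comp; auto. Qed.
Lemma cont_pow (f : R -> R) n x : continuous f x -> continuous (fun y => f y ^ n) x.
Proof. intros H. induction n; simpl; [apply continuous_const | apply cont_mult; auto]. Qed.
Lemma cont_rpow (f : R -> R) e x :
  0 < e -> continuous f x -> continuous (fun y => rpow (f y) e) x.
Proof.
  intros He H. apply (continuous_comp f (fun y => rpow y e)); auto.
  apply continuous_rpow; auto.
Qed.

(* Leaves the side goals [0 < e] for each real power [rpow _ e]. *)
Ltac solve_continuous :=
  repeat lazymatch goal with
  | |- continuous (fun y => _ * _) _ => apply cont_mult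
  | |- continuous (fun y => _ + _) _ => apply cont_plus
  | |- continuous (fun y => exp _) _ => apply cont_exp
  | |- continuous (fun y => _ ^ _) _ => apply cont_pow
  | |- continuous (fun y => rpow _ _) _ => apply cont_rpow
  | |- continuous (fun y => y) _ => apply continuous_id
  | |- continuous (Rmult ?c) _ => apply (cont_mult (fun _ => c) (fun y => y))
  | |- continuous (fun y => ?c) _ => apply continuous_const
  end.

(** * Improper integrals over the half-line *)

Lemma RInt_gauss K c x : 0 < c ->
  RInt (fun y => K * y * exp (- c * y ^ 2)) 0 x = K / (2 * c) * (1 - exp (- c * x ^ 2)).
Proof.
  intros Hc.
  set (G := fun y => - K / (2 * c) * exp (- c * y ^ 2)).
  assert (H : is_RInt (fun y => K * y * exp (- c * y ^ 2)) 0 x (minus (G x) (G 0))).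
  { apply (is_RInt_derive G).
    - intros z _. unfold G. auto_derive; auto. simpl. field. lra.
    - intros z _. apply (ex_derive_continuous (K := R_AbsRing) (V := R_NormedModule)).
      auto_derive; auto. }
  rewrite (is_RInt_unique _ _ _ _ H). unfold minus, plus, opp, G; simpl.
  replace (- c * (0 * (0 * 1))) with 0 by ring. rewrite exp_0. field; lra.
Qed.

Section ImproperIntegral.

Variables (g : R -> R) (K c : R).
Hypotheses (HK : 0 <= K) (Hc : 0 < c)
  (g_cont : forall x, 0 <= x -> continuous g x)
  (g_bound : forall x, 0 <= x -> 0 <= g x <= K * x * exp (- c * x ^ 2)).

Lemma ex_RInt_halfline a b : 0 <= a -> 0 <= b -> ex_RInt g a b.
Proof.
  intros Ha Hb. apply (ex_RInt_continuous (V := R_CompleteNormedModule)).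
  intros z [Hz _]. apply g_cont. eapply Rle_trans; [|exact Hz]. apply Rmin_glb; auto.
Qed.

Lemma RInt_halfline_le a b : 0 <= a <= b -> RInt g 0 a <= RInt g 0 b.
Proof.
  intros [Ha Hab]. rewrite <- (RInt_Chasles g 0 a b) by (apply ex_RInt_halfline; lra).
  assert (0 <= RInt g a b).
  { apply RInt_ge_0; auto. apply ex_RInt_halfline; lra. intros z Hz; apply g_bound; lra. }
  unfold plus; simpl. lra.
Qed.

Lemma RInt_halfline_bounded x : 0 <= x -> RInt g 0 x <= K / (2 * c).
Proof.
  intros Hx. apply Rle_trans with (RInt (fun y => K * y * exp (- c * y ^ 2)) 0 x).
  - apply RInt_le; auto.
    + apply ex_RInt_halfline; lra.
    + apply (ex_RInt_continuous (V := R_CompleteNormedModule)). intros z _.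
      apply (ex_derive_continuous (K := R_AbsRing) (V := R_NormedModule)). auto_derive; auto.
    + intros z Hz. apply (g_bound z ltac:(lra)).
  - rewrite RInt_gauss by auto.
    assert (0 < exp (- c * x ^ 2)) by apply exp_pos.
    assert (0 <= K / (2 * c)) by (apply Rdiv_le_0_compat; lra). nra.
Qed.

(* The improper integral is the supremum of the partial integrals, which increase and are bounded. *)
Lemma is_RInt_gen_halfline :
  exists l, is_RInt_gen g (at_point 0) (Rbar_locally p_infty) l
    /\ forall x, 0 <= x -> RInt g 0 x <= l.
Proof.
  set (E := fun v => exists x, 0 <= x /\ v = RInt g 0 x).
  assert (HE : bound E) by (exists (K / (2 * c)); intros v [x [Hx ->]]; apply RInt_halfline_bounded; auto).
  assert (HE0 : exists v, E v) by (exists (RInt g 0 0); exists 0; split; [lra | auto]).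
  destruct (completeness E HE HE0) as [l [Hub Hlub]].
  assert (Hle : forall x, 0 <= x -> RInt g 0 x <= l) by (intros x Hx; apply Hub; exists x; auto).
  exists l. split; [|exact Hle].
  intros P [eps HP].
  destruct (classic (exists x0, 0 <= x0 /\ l - eps < RInt g 0 x0)) as [[x0 [Hx0 Hlt]] | Hn].
  - apply Filter_prod with (Q := fun a => a = 0) (R := fun b => x0 < b).
    + reflexivity.
    + exists x0; auto.
    + intros a b -> Hb. exists (RInt g 0 b). split.
      * apply (RInt_correct (V := R_CompleteNormedModule)), ex_RInt_halfline; lra.
      * apply HP. change (Rabs (RInt g 0 b - l) < eps).
        pose proof (Hle b ltac:(lra)). pose proof (RInt_halfline_le x0 b ltac:(lra)).
        pose proof (cond_pos eps). rewrite Rabs_left1 by lra. lra.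
  - exfalso. assert (l <= l - eps).
    { apply Hlub. intros v [x [Hx ->]]. apply Rnot_lt_le. intros Hc'. apply Hn. exists x; auto. }
    pose proof (cond_pos eps). lra.
Qed.

Lemma Iinf_ge_RInt x : 0 <= x -> RInt g 0 x <= Iinf g.
Proof.
  intros Hx. destruct is_RInt_gen_halfline as [l [Hl Hle]].
  unfold Iinf. rewrite (is_RInt_gen_unique (V := R_CompleteNormedModule) g l Hl). auto.
Qed.

Lemma Iinf_nonneg : 0 <= Iinf g.
Proof. pose proof (Iinf_ge_RInt 0 (Rle_refl 0)) as H. rewrite RInt_point in H. exact H. Qed.

Lemma Iinf_pos : (forall x, 0 < x -> 0 < g x) -> 0 < Iinf g.
Proof.
  intros Hpos. eapply Rlt_le_trans; [|apply (Iinf_ge_RInt 1); lra].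
  apply RInt_gt_0; [lra | intros; apply Hpos; lra | intros; apply g_cont; lra].
Qed.

End ImproperIntegral.

(** * The serving-distance densities *)

Definition model_hyp (p : params) : Prop :=
  0 < P1 p /\ 0 < P2 p /\ 2 < al1 p /\ 2 < al2 p /\ 0 < lam1 p /\ 0 < lam2 p
  /\ 1 <= T1 p /\ 1 <= T2 p.

Definition gauss_shape (D lam c e y : R) : R :=
  D * y * exp (- PI * (lam * y ^ 2 + c * rpow y e)).

Section GaussShape.

Variables (D lam c e : R).
Hypotheses (HD : 0 <= D) (Hlam : 0 < lam) (Hc : 0 <= c) (He : 0 < e).

Lemma gauss_shape_continuous y : continuous (gauss_shape D lam c e) y.
Proof. unfold gauss_shape. solve_continuous. exact He. Qed.

Lemma gauss_shape_nonneg y : 0 <= y -> 0 <= gauss_shape D lam c e y.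
Proof.
  intros Hy. unfold gauss_shape.
  apply Rmult_le_pos; [apply Rmult_le_pos; auto | left; apply exp_pos].
Qed.

Lemma gauss_shape_pos y : 0 < D -> 0 < y -> 0 < gauss_shape D lam c e y.
Proof.
  intros HD' Hy. unfold gauss_shape.
  apply Rmult_lt_0_compat; [apply Rmult_lt_0_compat; auto | apply exp_pos].
Qed.

Lemma gauss_shape_le_quadratic y :
  0 <= y -> gauss_shape D lam c e y <= D * y * exp (- (PI * lam) * y ^ 2).
Proof.
  intros Hy. unfold gauss_shape. apply Rmult_le_compat_l; [apply Rmult_le_pos; auto|].
  apply exp_le_mono. pose proof PI_RGT_0. pose proof (rpow_nonneg y e).
  assert (0 <= PI * (c * rpow y e)) by (apply Rmult_le_pos; [lra | apply Rmult_le_pos; auto]).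
  lra.
Qed.

Lemma gauss_shape_le_power y :
  0 <= y -> gauss_shape D lam c e y <= D * y * exp (- (PI * c) * rpow y e).
Proof.
  intros Hy. unfold gauss_shape. apply Rmult_le_compat_l; [apply Rmult_le_pos; auto|].
  apply exp_le_mono. pose proof PI_RGT_0.
  assert (0 <= PI * (lam * y ^ 2)) by (apply Rmult_le_pos; [lra | apply Rmult_le_pos; [lra | apply pow2_ge_0]]).
  lra.
Qed.

Lemma Iinf_gauss_shape_pos : 0 < D -> 0 < Iinf (gauss_shape D lam c e).
Proof.
  intros HD'. pose proof PI_RGT_0.
  apply (Iinf_pos _ D (PI * lam)); auto.
  - apply Rmult_lt_0_compat; lra.
  - intros x _. apply gauss_shape_continuous.
  - intros x Hx. split; [apply gauss_shape_nonneg | apply gauss_shape_le_quadratic]; auto.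
  - intros x Hx. apply gauss_shape_pos; auto.
Qed.

Lemma moment_gauss_shape_eq s y :
  D * rpow y (s + 1) * exp (- PI * (lam * y ^ 2 + c * rpow y e))
  = rpow y s * gauss_shape D lam c e y.
Proof. unfold gauss_shape. rewrite <- rpow_mult_base. ring. Qed.

Lemma Iinf_moment_gauss_shape_pos s :
  0 < D -> 0 <= s -> 0 < Iinf (fun y => rpow y s * gauss_shape D lam c e y).
Proof.
  intros HD' Hs. pose proof PI_RGT_0.
  assert (Hpl : 0 < PI * lam) by (apply Rmult_lt_0_compat; lra).
  apply (Iinf_pos _ (D * exp (s ^ 2 / (2 * (PI * lam)))) (PI * lam / 2)).
  - apply Rmult_le_pos; [lra | left; apply exp_pos].
  - lra.
  - intros x _.
    apply (continuous_ext (fun y => D * rpow y (s + 1) * exp (- PI * (lam * y ^ 2 + c * rpow y e)))).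
    + intros y. apply moment_gauss_shape_eq.
    + solve_continuous; lra.
  - intros x Hx. pose proof (rpow_nonneg x s). split.
    + apply Rmult_le_pos; [auto | apply gauss_shape_nonneg; auto].
    + apply Rle_trans with (rpow x s * (D * x * exp (- (PI * lam) * x ^ 2))).
      { apply Rmult_le_compat_l; [auto | apply gauss_shape_le_quadratic; auto]. }
      pose proof (rpow_gauss_le s (PI * lam) x Hs Hpl Hx).
      assert (0 <= D * x) by (apply Rmult_le_pos; lra).
      replace (rpow x s * (D * x * exp (- (PI * lam) * x ^ 2)))
        with (D * x * (rpow x s * exp (- (PI * lam) * x ^ 2))) by ring.
      replace (D * exp (s ^ 2 / (2 * (PI * lam))) * x * exp (- (PI * lam / 2) * x ^ 2))
        with (D * x * (exp (s ^ 2 / (2 * (PI * lam))) * exp (- (PI * lam / 2) * x ^ 2))) by ring.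
      apply Rmult_le_compat_l; auto.
  - intros x Hx. apply Rmult_lt_0_compat; [apply rpow_pos; auto | apply gauss_shape_pos; auto].
Qed.

End GaussShape.

Section Densities.

Variable p : params.
Hypothesis Hp : model_hyp p.

Lemma A1_eq : A1 p = 2 * PI * lam1 p
  * Iinf (gauss_shape 1 (lam1 p) (lam2 p * rpow (P2 p / P1 p) (2 / al2 p)) (2 * al1 p / al2 p)).
Proof.
  unfold A1. do 2 f_equal. apply functional_extensionality. intros z.
  unfold gauss_shape. rewrite Rmult_1_l, Rmult_assoc, <- exp_plus. f_equal. f_equal. ring.
Qed.

Lemma A2_eq : A2 p = 2 * PI * lam2 p
  * Iinf (gauss_shape 1 (lam2 p) (lam1 p * rpow (P1 p / P2 p) (2 / al1 p)) (2 * al2 p / al1 p)).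
Proof.
  unfold A2. do 2 f_equal. apply functional_extensionality. intros z.
  unfold gauss_shape. rewrite Rmult_1_l, Rmult_assoc, <- exp_plus. f_equal. f_equal. ring.
Qed.

Lemma A1_pos : 0 < A1 p.
Proof.
  destruct Hp as (HP1 & HP2 & Ha1 & Ha2 & Hl1 & Hl2 & _). pose proof PI_RGT_0.
  rewrite A1_eq. apply Rmult_lt_0_compat; [nra|].
  apply Iinf_gauss_shape_pos; try lra.
  - apply Rmult_le_pos; [lra | apply rpow_nonneg].
  - apply Rdiv_lt_0_compat; lra.
Qed.

Lemma A2_pos : 0 < A2 p.
Proof.
  destruct Hp as (HP1 & HP2 & Ha1 & Ha2 & Hl1 & Hl2 & _). pose proof PI_RGT_0.
  rewrite A2_eq. apply Rmult_lt_0_compat; [nra|].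
  apply Iinf_gauss_shape_pos; try lra.
  - apply Rmult_le_pos; [lra | apply rpow_nonneg].
  - apply Rdiv_lt_0_compat; lra.
Qed.

Lemma fY1_eq : fY1 p = gauss_shape (2 * PI * lam1 p / A1 p) (lam1 p)
  (lam2 p * rpow (P2 p / P1 p) (2 / al2 p)) (2 * al1 p / al2 p).
Proof. reflexivity. Qed.

Lemma fY2_eq : fY2 p = gauss_shape (2 * PI * lam2 p / A2 p) (lam2 p)
  (lam1 p * rpow (P1 p / P2 p) (2 / al1 p)) (2 * al2 p / al1 p).
Proof.
  apply functional_extensionality. intros y. unfold fY2, gauss_shape. do 3 f_equal. ring.
Qed.

End Densities.

(** * Positivity of Lbar *)

Lemma continuous_RInt_bounds (f lo hi : R -> R) x :
  (forall y, continuous f y) -> continuous lo x -> continuous hi x ->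
  continuous (fun r => RInt f (lo r) (hi r)) x.
Proof.
  intros Hf Hlo Hhi.
  apply (continuous_comp_2 lo hi (fun a b => RInt f a b)); auto.
  apply (continuous_RInt (V := R_NormedModule) f (lo x) (hi x) (fun a b => RInt f a b)).
  apply filter_forall. intros z.
  apply (RInt_correct (V := R_CompleteNormedModule)).
  apply (ex_RInt_continuous (V := R_CompleteNormedModule)). intros; apply Hf.
Qed.

Section Annulus.

Variables (f : R -> R) (D e de ka ka' ga : R).
Hypotheses (f_cont : forall y, continuous f y)
  (f_bound : forall y, 0 <= y -> 0 <= f y <= D * y * exp (- e * rpow y de))
  (HD : 0 <= D) (He : 0 < e) (Hga : 0 < ga) (Hde : 0 < de) (Hgade : ga * de = 2)
  (Hka : 0 < ka) (Hkk : ka <= ka').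

Lemma ex_RInt_cont a b : ex_RInt f a b.
Proof. apply (ex_RInt_continuous (V := R_CompleteNormedModule)). intros; apply f_cont. Qed.

Lemma RInt_le_tail lo hi :
  0 <= lo <= hi -> RInt f lo hi <= D * hi ^ 2 * exp (- e * rpow lo de).
Proof.
  intros [Hlo Hlh]. set (M := D * hi * exp (- e * rpow lo de)).
  assert (HM : RInt f lo hi <= (hi - lo) * M).
  { replace ((hi - lo) * M) with (RInt (fun _ => M) lo hi) by (rewrite RInt_const; reflexivity).
    apply RInt_le; auto; [apply ex_RInt_cont | apply ex_RInt_const|].
    intros y Hy. eapply Rle_trans; [apply f_bound; lra|]. unfold M.
    apply Rmult_le_compat; [apply Rmult_le_pos; lra | left; apply exp_pos | |].
    - apply Rmult_le_compat_l; lra.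
    - apply exp_le_mono. assert (rpow lo de <= rpow y de) by (apply rpow_le_compat_l; lra). nra. }
  assert (0 <= M) by (unfold M; apply Rmult_le_pos; [apply Rmult_le_pos | left; apply exp_pos]; lra).
  unfold M in *. nra.
Qed.

(* The inner integral lives on the annulus [ka r^ga, ka' r^ga], where the tail bound of [f]
   decays like [exp (- e ka^de r^2)] because [ga * de = 2]. *)
Lemma annulus_integrand_bound r : 0 <= r ->
  0 <= r * RInt f (ka * rpow r ga) (ka' * rpow r ga)
  <= D * ka' ^ 2 * exp ((2 * ga) ^ 2 / (2 * (e * rpow ka de)))
     * r * exp (- (e * rpow ka de / 2) * r ^ 2).
Proof.
  intros Hr. set (c0 := e * rpow ka de).
  assert (Hc0 : 0 < c0) by (apply Rmult_lt_0_compat; [lra | apply rpow_pos; auto]).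
  set (u := rpow r ga). assert (Hu : 0 <= u) by apply rpow_nonneg.
  assert (Hlo : 0 <= ka * u) by (apply Rmult_le_pos; lra).
  assert (Hlh : ka * u <= ka' * u) by (apply Rmult_le_compat_r; auto).
  split.
  { apply Rmult_le_pos; auto. apply RInt_ge_0; auto; [apply ex_RInt_cont|].
    intros y Hy; apply f_bound; lra. }
  assert (Hlo_de : rpow (ka * u) de = rpow ka de * r ^ 2).
  { unfold u. rewrite rpow_mult_distr, rpow_rpow, Hgade, rpow_2; auto; lra. }
  assert (Hhi2 : (ka' * u) ^ 2 = ka' ^ 2 * rpow r (2 * ga)).
  { unfold u. rewrite Rpow_mult_distr, <- (rpow_2 (rpow r ga)) by apply rpow_nonneg.
    rewrite rpow_rpow by lra. do 2 f_equal; ring. }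
  pose proof (RInt_le_tail (ka * u) (ka' * u) ltac:(lra)) as HT.
  rewrite Hlo_de, Hhi2 in HT. replace (- e * (rpow ka de * r ^ 2)) with (- c0 * r ^ 2) in HT by (unfold c0; ring).
  pose proof (rpow_gauss_le (2 * ga) c0 r ltac:(lra) Hc0 Hr) as HG.
  assert (HDk : 0 <= D * ka' ^ 2) by (apply Rmult_le_pos; [auto | apply pow2_ge_0]).
  apply Rle_trans with (r * (D * ka' ^ 2 * (rpow r (2 * ga) * exp (- c0 * r ^ 2)))).
  { apply Rmult_le_compat_l; auto. lra. }
  replace (D * ka' ^ 2 * exp ((2 * ga) ^ 2 / (2 * c0)) * r * exp (- (c0 / 2) * r ^ 2))
    with (r * (D * ka' ^ 2 * (exp ((2 * ga) ^ 2 / (2 * c0)) * exp (- (c0 / 2) * r ^ 2)))) by ring.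
  apply Rmult_le_compat_l; auto. apply Rmult_le_compat_l; auto.
Qed.

Lemma annulus_integrand_continuous x :
  continuous (fun r => r * RInt f (ka * rpow r ga) (ka' * rpow r ga)) x.
Proof.
  apply cont_mult; [apply continuous_id|].
  apply continuous_RInt_bounds; auto; solve_continuous; auto.
Qed.

Lemma annulus_integral_nonneg :
  0 <= Iinf (fun r => r * RInt f (ka * rpow r ga) (ka' * rpow r ga)).
Proof.
  assert (0 < rpow ka de) by (apply rpow_pos; auto).
  apply (Iinf_nonneg _ (D * ka' ^ 2 * exp ((2 * ga) ^ 2 / (2 * (e * rpow ka de))))
                     (e * rpow ka de / 2)).
  - apply Rmult_le_pos; [apply Rmult_le_pos; [auto | apply pow2_ge_0] | left; apply exp_pos].
  - apply Rdiv_lt_0_compat; [apply Rmult_lt_0_compat|]; lra.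
  - intros x _. apply annulus_integrand_continuous.
  - apply annulus_integrand_bound.
Qed.

Lemma annulus_integral_pos : (forall y, 0 < y -> 0 < f y) -> ka < ka' ->
  0 < Iinf (fun r => r * RInt f (ka * rpow r ga) (ka' * rpow r ga)).
Proof.
  intros Hpos Hlt. assert (0 < rpow ka de) by (apply rpow_pos; auto).
  apply (Iinf_pos _ (D * ka' ^ 2 * exp ((2 * ga) ^ 2 / (2 * (e * rpow ka de))))
                  (e * rpow ka de / 2)).
  - apply Rmult_le_pos; [apply Rmult_le_pos; [auto | apply pow2_ge_0] | left; apply exp_pos].
  - apply Rdiv_lt_0_compat; [apply Rmult_lt_0_compat|]; lra.
  - intros x _. apply annulus_integrand_continuous.
  - apply annulus_integrand_bound.
  - intros r Hr. pose proof (rpow_pos r ga Hr).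
    apply Rmult_lt_0_compat; auto. apply RInt_gt_0.
    + apply Rmult_lt_compat_r; auto.
    + intros y Hy. apply Hpos. assert (0 < ka * rpow r ga) by (apply Rmult_lt_0_compat; auto). lra.
    + intros; apply f_cont.
Qed.

End Annulus.

Lemma rpow_bias_le x y a T : 0 < x -> 0 < y -> 0 < a -> 1 <= T ->
  0 < rpow (x / (y * T)) a <= rpow (x / y) a.
Proof.
  intros Hx Hy Ha HT. split; [apply rpow_pos, Rdiv_lt_0_compat; nra|].
  apply rpow_le_compat_l; [lra|]. split; [apply Rdiv_le_0_compat; nra|].
  unfold Rdiv. apply Rmult_le_compat_l; [lra|]. apply Rinv_le_contravar; nra.
Qed.

Lemma rpow_bias_lt x y a T : 0 < x -> 0 < y -> 0 < a -> 1 < T ->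
  rpow (x / (y * T)) a < rpow (x / y) a.
Proof.
  intros Hx Hy Ha HT. apply rpow_lt_compat_l; auto. split; [apply Rdiv_lt_0_compat; nra|].
  unfold Rdiv. apply Rmult_lt_compat_l; [lra|]. apply Rinv_lt_contravar; nra.
Qed.

Lemma Lbar_gen_nonneg_pos p Pj aj lj fY D e T :
  0 < P1 p -> 0 < al1 p -> 0 < Pj -> 0 < aj -> 0 < lj -> 0 <= D -> 0 < e -> 1 <= T ->
  (forall y, continuous fY y) ->
  (forall y, 0 <= y -> 0 <= fY y <= D * y * exp (- e * rpow y (2 * aj / al1 p))) ->
  (forall y, 0 < y -> 0 < fY y) ->
  0 <= Lbar_gen p Pj aj lj fY T /\ (1 < T -> 0 < Lbar_gen p Pj aj lj fY T).
Proof.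
  intros HP1 Ha1 HPj Haj Hlj HD He HT Hcont Hbound Hpos. pose proof PI_RGT_0.
  assert (Hc : 0 < 2 * PI * lj) by (apply Rmult_lt_0_compat; lra).
  assert (Hga : 0 < al1 p / aj) by (apply Rdiv_lt_0_compat; lra).
  assert (Hde : 0 < 2 * aj / al1 p) by (apply Rdiv_lt_0_compat; lra).
  assert (Hgade : al1 p / aj * (2 * aj / al1 p) = 2) by (field; lra).
  destruct (rpow_bias_le Pj (P1 p) (1 / aj) T) as [Hka Hkk]; auto.
  { apply Rdiv_lt_0_compat; lra. }
  unfold Lbar_gen. split.
  - apply Rmult_le_pos; [lra|]. eapply annulus_integral_nonneg; eauto.
  - intros HT1. apply Rmult_lt_0_compat; auto. eapply annulus_integral_pos; eauto.
    apply rpow_bias_lt; auto. apply Rdiv_lt_0_compat; lra.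
Qed.

Section Lbar.

Variable p : params.
Hypothesis Hp : model_hyp p.

Lemma Lbar1_nonneg_pos : 0 <= Lbar1 p (T1 p) /\ (1 < T1 p -> 0 < Lbar1 p (T1 p)).
Proof.
  pose proof (A1_pos p Hp) as HA.
  destruct Hp as (HP1 & HP2 & Ha1 & Ha2 & Hl1 & Hl2 & HT1 & HT2). pose proof PI_RGT_0.
  assert (HD : 0 < 2 * PI * lam1 p / A1 p) by (apply Rdiv_lt_0_compat; nra).
  assert (Hc : 0 <= lam2 p * rpow (P2 p / P1 p) (2 / al2 p)) by (apply Rmult_le_pos; [lra | apply rpow_nonneg]).
  assert (He : 0 < 2 * al1 p / al2 p) by (apply Rdiv_lt_0_compat; lra).
  apply (Lbar_gen_nonneg_pos p _ _ _ _ (2 * PI * lam1 p / A1 p) (PI * lam1 p)); try lra.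
  - nra.
  - rewrite fY1_eq. apply gauss_shape_continuous; auto.
  - intros y Hy. replace (2 * al1 p / al1 p) with 2 by (field; lra). rewrite rpow_2 by auto.
    rewrite fY1_eq. split; [apply gauss_shape_nonneg | apply gauss_shape_le_quadratic]; auto; lra.
  - intros y Hy. rewrite fY1_eq. apply gauss_shape_pos; auto.
Qed.

Lemma Lbar2_nonneg_pos : 0 <= Lbar2 p (T2 p) /\ (1 < T2 p -> 0 < Lbar2 p (T2 p)).
Proof.
  pose proof (A2_pos p Hp) as HA.
  destruct Hp as (HP1 & HP2 & Ha1 & Ha2 & Hl1 & Hl2 & HT1 & HT2). pose proof PI_RGT_0.
  assert (HD : 0 < 2 * PI * lam2 p / A2 p) by (apply Rdiv_lt_0_compat; nra).
  assert (Hk : 0 < rpow (P1 p / P2 p) (2 / al1 p)) by (apply rpow_pos, Rdiv_lt_0_compat; lra).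
  assert (He : 0 < 2 * al2 p / al1 p) by (apply Rdiv_lt_0_compat; lra).
  apply (Lbar_gen_nonneg_pos p _ _ _ _ (2 * PI * lam2 p / A2 p)
           (PI * (lam1 p * rpow (P1 p / P2 p) (2 / al1 p)))); try lra.
  - apply Rmult_lt_0_compat; [lra | apply Rmult_lt_0_compat; lra].
  - rewrite fY2_eq. apply gauss_shape_continuous; auto.
  - intros y Hy. rewrite fY2_eq.
    split; [apply gauss_shape_nonneg | apply gauss_shape_le_power]; auto; nra.
  - intros y Hy. rewrite fY2_eq. apply gauss_shape_pos; auto; nra.
Qed.

Lemma Lbar_pos : 1 < Rmax (T1 p) (T2 p) -> 0 < Lbar p.
Proof.
  intros HT. destruct Lbar1_nonneg_pos as [L1 L1']. destruct Lbar2_nonneg_pos as [L2 L2'].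
  unfold Lbar, Rmax in *. destruct (Rle_dec (T1 p) (T2 p)).
  - specialize (L2' HT). lra.
  - specialize (L1' HT). lra.
Qed.

End Lbar.

(** * The probability p_cbar and the Poisson tail Q1 *)

Lemma Series_nonneg (a : nat -> R) : (forall n, 0 <= a n) -> ex_series a -> 0 <= Series a.
Proof.
  intros H Hex. replace 0 with (Series (fun n => 0 * a n)) at 1 by (rewrite Series_scal_l; ring).
  apply Series_le; auto. intros n; split; [lra | rewrite Rmult_0_l; auto].
Qed.

Lemma Series_filter_ge (a : nat -> R) U :
  Series (fun k => if Nat.leb U k then a k else 0) = Series (fun k => a (U + k)%nat).
Proof.
  rewrite (Series_incr_n_aux _ U).
  - apply Series_ext. intros n. replace (Nat.leb U (U + n)) with true; auto.
    symmetry; apply Nat.leb_le; lia.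
  - intros k Hk. replace (Nat.leb U k) with false; auto. symmetry; apply Nat.leb_gt; lia.
Qed.

Lemma Series_shift_step (a : nat -> R) U : ex_series a ->
  Series (fun k => a (U + k)%nat) = a U + Series (fun k => a (S U + k)%nat).
Proof.
  intros H. rewrite Series_incr_1 by (apply (ex_series_incr_n a U); auto).
  rewrite Nat.add_0_r. f_equal. apply Series_ext. intros n. f_equal. lia.
Qed.

Lemma fsum_S n f : fsum (S n) f = fsum n f + f n.
Proof.
  unfold fsum. rewrite seq_S, fold_right_app. simpl.
  generalize (f n). induction (seq 0 n); simpl; intros; [ring | rewrite IHl; ring].
Qed.

Lemma INR_fact_pos k : 0 < INR (fact k).
Proof. apply lt_0_INR, lt_O_fact. Qed.

Definition exp_coef (L : R) (k : nat) : R := L ^ k / INR (fact k).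
Definition exp_coef_succ (L : R) (k : nat) : R := L ^ k / INR (fact (k + 1)).
Definition exp_coef_tail (L : R) (U : nat) : R := Series (fun k => exp_coef L (U + k)).
Definition exp_coef_succ_tail (L : R) (U : nat) : R := Series (fun k => exp_coef_succ L (U + k)).

Lemma is_series_exp_coef L : is_series (exp_coef L) (exp L).
Proof.
  pose proof (is_exp_Reals L) as H. unfold is_pseries in H.
  eapply is_series_ext; [|exact H]. intros n. simpl. rewrite pow_n_pow.
  unfold scal; simpl. unfold mult, exp_coef; simpl. unfold Rdiv. ring.
Qed.

Lemma ex_series_exp_coef_succ L : ex_series (exp_coef_succ L).
Proof.
  apply (ex_series_le (V := R_CompleteNormedModule) _ (exp_coef (Rabs L)));
    [| eexists; apply is_series_exp_coef].
  intros n. unfold norm; simpl. unfold abs; simpl. unfold exp_coef_succ, exp_coef.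
  rewrite Rabs_div by (apply Rgt_not_eq, INR_fact_pos). rewrite <- RPow_abs.
  rewrite (Rabs_pos_eq (INR _)) by (left; apply INR_fact_pos).
  unfold Rdiv. apply Rmult_le_compat_l; [apply pow_le, Rabs_pos|].
  apply Rinv_le_contravar; [apply INR_fact_pos|]. apply le_INR.
  rewrite Nat.add_1_r. simpl. lia.
Qed.

Lemma exp_coef_tail_step L U : exp_coef_tail L U = exp_coef L U + exp_coef_tail L (S U).
Proof. apply Series_shift_step. eexists; apply is_series_exp_coef. Qed.

Lemma exp_coef_succ_tail_step L U :
  exp_coef_succ_tail L U = exp_coef_succ L U + exp_coef_succ_tail L (S U).
Proof. apply Series_shift_step, ex_series_exp_coef_succ. Qed.

Lemma exp_split L U : exp L = fsum U (exp_coef L) + exp_coef_tail L U.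
Proof.
  induction U as [|U IH].
  - unfold exp_coef_tail. rewrite (Series_ext _ (exp_coef L)) by reflexivity.
    rewrite (is_series_unique _ _ (is_series_exp_coef L)). unfold fsum; simpl; ring.
  - rewrite IH, fsum_S, exp_coef_tail_step. ring.
Qed.

Lemma exp_coef_succ_tail_nonneg L U : 0 <= L -> 0 <= exp_coef_succ_tail L U.
Proof.
  intros HL. apply Series_nonneg.
  - intros n. apply Rdiv_le_0_compat; [apply pow_le; auto | apply INR_fact_pos].
  - apply (ex_series_incr_n (exp_coef_succ L) U), ex_series_exp_coef_succ.
Qed.

Lemma exp_coef_tail_ge L U : 0 <= L -> INR U * exp_coef_succ_tail L U <= exp_coef_tail L U.
Proof.
  intros HL. unfold exp_coef_tail, exp_coef_succ_tail. rewrite <- Series_scal_l.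
  apply Series_le; [| apply (ex_series_incr_n (exp_coef L) U); eexists; apply is_series_exp_coef].
  intros n. unfold exp_coef_succ, exp_coef.
  rewrite Nat.add_1_r, fact_simpl, mult_INR.
  pose proof (INR_fact_pos (U + n)). pose proof (pow_le L (U + n) HL).
  assert (INR U <= INR (S (U + n))) by (apply le_INR; lia).
  assert (0 < INR (S (U + n))) by (apply lt_0_INR; lia).
  split.
  - apply Rmult_le_pos; [apply pos_INR | apply Rdiv_le_0_compat; nra].
  - replace (INR U * (L ^ (U + n) / (INR (S (U + n)) * INR (fact (U + n)))))
      with (L ^ (U + n) / INR (fact (U + n)) * (INR U / INR (S (U + n)))) by (field; lra).
    rewrite <- (Rmult_1_r (L ^ (U + n) / INR (fact (U + n)))) at 2.
    apply Rmult_le_compat_l; [apply Rdiv_le_0_compat; lra|].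
    apply Rmult_le_reg_r with (INR (S (U + n))); auto.
    unfold Rdiv. rewrite Rmult_assoc, Rinv_l by lra. lra.
Qed.

Section NullingProbability.

Variable p : params.

Lemma pcbar_eq U : pcbar p U
  = exp (- Lbar p) * (exp_coef_tail (Lbar p) U - INR U * exp_coef_succ_tail (Lbar p) U).
Proof.
  unfold pcbar, pc. set (L := Lbar p).
  change (fun k => L ^ k / INR (fact k)) with (exp_coef L).
  rewrite (Series_filter_ge (fun k => L ^ k / INR (fact (k + 1)))).
  change (Series (fun k => L ^ (U + k) / INR (fact (U + k + 1)))) with (exp_coef_succ_tail L U).
  pose proof (exp_split L U) as E.
  replace (fsum U (exp_coef L)) with (exp L - exp_coef_tail L U) by lra.
  rewrite exp_Ropp. field. apply Rgt_not_eq, exp_pos.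
Qed.

Hypothesis HL : 0 <= Lbar p.

Lemma pcbar_nonneg U : 0 <= pcbar p U.
Proof.
  rewrite pcbar_eq. apply Rmult_le_pos; [left; apply exp_pos|].
  pose proof (exp_coef_tail_ge (Lbar p) U HL). lra.
Qed.

Lemma pcbar_succ_le U : pcbar p (S U) <= pcbar p U.
Proof.
  rewrite !pcbar_eq. apply Rmult_le_compat_l; [left; apply exp_pos|].
  set (L := Lbar p). rewrite (exp_coef_tail_step L U), (exp_coef_succ_tail_step L U).
  pose proof (exp_coef_succ_tail_nonneg L (S U) HL).
  assert (exp_coef L U - INR U * exp_coef_succ L U >= 0).
  { unfold exp_coef, exp_coef_succ. rewrite Nat.add_1_r, fact_simpl, mult_INR, S_INR.
    pose proof (INR_fact_pos U). pose proof (pow_le L U HL). pose proof (pos_INR U).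
    replace (L ^ U / INR (fact U) - INR U * (L ^ U / ((INR U + 1) * INR (fact U))))
      with (L ^ U / ((INR U + 1) * INR (fact U))) by (field; lra).
    apply Rle_ge, Rdiv_le_0_compat; [auto | apply Rmult_lt_0_compat; lra]. }
  rewrite S_INR. lra.
Qed.

Lemma pcbar_antitone U V : (U <= V)%nat -> pcbar p V <= pcbar p U.
Proof. intros HUV. induction HUV; [lra | pose proof (pcbar_succ_le m); lra]. Qed.

End NullingProbability.

(* [Q1 U] is the Poisson tail [Pr(K0 >= U)], which keeps its term [k = U]. *)
Lemma Q1_pos p U : 0 < Lbar p -> 0 < Q1 p U.
Proof.
  intros HL. unfold Q1. set (L := Lbar p) in *.
  rewrite (Series_ext _ (fun k => if Nat.leb U k then exp (- L) * exp_coef L k else 0)).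
  2:{ intros n. replace (Nat.eqb (Nat.min U n) U) with (Nat.leb U n).
      - destruct (Nat.leb U n); auto. unfold poisson_pmf, exp_coef. fold L.
        field. apply Rgt_not_eq, INR_fact_pos.
      - destruct (Nat.leb U n) eqn:E; symmetry.
        + apply Nat.eqb_eq. apply Nat.leb_le in E. lia.
        + apply Nat.eqb_neq. apply Nat.leb_gt in E. lia. }
  assert (Hex : ex_series (fun k => exp (- L) * exp_coef L k)).
  { apply (ex_series_scal_l (V := R_NormedModule)). eexists; apply is_series_exp_coef. }
  rewrite Series_filter_ge, (Series_shift_step _ U Hex).
  assert (0 <= Series (fun k => exp (- L) * exp_coef L (S U + k))).
  { apply Series_nonneg.
    - intros n. apply Rmult_le_pos; [left; apply exp_pos|].
      apply Rdiv_le_0_compat; [apply pow_le; lra | apply INR_fact_pos].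
    - apply (ex_series_incr_n (fun k => exp (- L) * exp_coef L k)); auto. }
  assert (0 < exp (- L) * exp_coef L U).
  { apply Rmult_lt_0_compat; [apply exp_pos|].
    apply Rdiv_lt_0_compat; [apply pow_lt; auto | apply INR_fact_pos]. }
  lra.
Qed.

(** * The coefficients b_j *)

Lemma lsum_le {A} (l : list A) f g :
  (forall x, In x l -> f x <= g x) -> lsum l f <= lsum l g.
Proof. induction l as [|x l IH]; simpl; intros H; [lra | apply Rplus_le_compat; auto]. Qed.

Lemma lsum_nonneg {A} (l : list A) f : (forall x, In x l -> 0 <= f x) -> 0 <= lsum l f.
Proof. induction l as [|x l IH]; simpl; intros H; [lra | apply Rplus_le_le_0_compat; auto]. Qed.

Lemma lsum_pos {A} (l : list A) f :
  (forall x, In x l -> 0 <= f x) -> (exists x, In x l /\ 0 < f x) -> 0 < lsum l f.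
Proof.
  induction l as [|x l IH]; simpl; intros H [y [Hy Hpos]]; [contradiction|].
  destruct Hy as [<- | Hy].
  - pose proof (lsum_nonneg l f (fun z Hz => H z (or_intror Hz))). lra.
  - pose proof (H x (or_introl eq_refl)). assert (0 < lsum l f) by (apply IH; eauto). lra.
Qed.

Lemma pprod_nonneg a0 c m :
  (forall a, (a0 <= a)%nat -> 0 <= c a) -> 0 <= pprod_from a0 c m.
Proof.
  revert a0. induction m as [|x m IH]; simpl; intros a0 H; [lra|].
  apply Rmult_le_pos; [apply Rmult_le_pos|].
  - left; apply Rinv_0_lt_compat, INR_fact_pos.
  - apply pow_le, H; lia.
  - apply IH. intros a Ha; apply H; lia.
Qed.

Lemma pprod_pos a0 c m : (forall a, (a0 <= a)%nat -> 0 < c a) -> 0 < pprod_from a0 c m.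
Proof.
  revert a0. induction m as [|x m IH]; simpl; intros a0 H; [lra|].
  apply Rmult_lt_0_compat; [apply Rmult_lt_0_compat|].
  - apply Rinv_0_lt_compat, INR_fact_pos.
  - apply pow_lt, H; lia.
  - apply IH. intros a Ha; apply H; lia.
Qed.

Lemma pprod_le a0 c c' m :
  (forall a, (a0 <= a)%nat -> 0 <= c a <= c' a) -> pprod_from a0 c m <= pprod_from a0 c' m.
Proof.
  revert a0. induction m as [|x m IH]; simpl; intros a0 H; [lra|].
  assert (0 <= / INR (fact x)) by (left; apply Rinv_0_lt_compat, INR_fact_pos).
  apply Rmult_le_compat.
  - apply Rmult_le_pos; auto. apply pow_le, H; lia.
  - apply pprod_nonneg. intros a Ha; apply H; lia.
  - apply Rmult_le_compat_l; auto. apply pow_incr, H; lia.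
  - apply IH. intros a Ha; apply H; lia.
Qed.

Lemma in_lists_bounded n k l :
  length l = n -> (forall x, In x l -> (x <= k)%nat) -> In l (lists_bounded n k).
Proof.
  revert l. induction n as [|n IH]; intros l Hl Hx.
  - destruct l; [left; auto | discriminate].
  - destruct l as [|x l]; [discriminate|].
    change (In (x :: l) (flat_map (fun x => map (cons x) (lists_bounded n k)) (seq 0 (S k)))).
    apply in_flat_map. exists x. split.
    + apply in_seq. assert (x <= k)%nat by (apply Hx; left; auto). lia.
    + apply in_map, IH; [simpl in Hl; lia | intros y Hy; apply Hx; right; auto].
Qed.

Lemma wsum_from_repeat0 a k : wsum_from a (repeat 0%nat k) = 0%nat.
Proof. revert a. induction k; simpl; intros; auto. rewrite IHk. lia. Qed.

(* The partition of [n] into the single part [n]. *)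
Lemma Mset_nonempty n : exists m, In m (Mset n).
Proof.
  destruct n as [|k]; [exists []; left; auto|].
  exists (S k :: repeat 0%nat k). unfold Mset. apply filter_In. split.
  - apply in_lists_bounded; [simpl; rewrite repeat_length; auto|].
    intros x [<- | Hx]; [lia | apply repeat_spec in Hx; lia].
  - simpl. rewrite wsum_from_repeat0. apply Nat.eqb_eq. lia.
Qed.

Lemma in_Nset_00n n : In (0%nat, 0%nat, n) (Nset n).
Proof.
  unfold Nset. apply in_flat_map. exists 0%nat. split; [apply in_seq; lia|].
  apply in_map_iff. exists 0%nat. split; [f_equal; lia | apply in_seq; lia].
Qed.

Lemma two_div_lt_1 al : 2 < al -> 2 / al < 1.
Proof. intros Ha. apply Rmult_lt_reg_r with al; [lra|]. unfold Rdiv. rewrite Rmult_assoc, Rinv_l; lra. Qed.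

Lemma tier_coef_pos lam al a : 0 < lam -> 2 < al -> (1 <= a)%nat ->
  0 < 2 * PI * lam / (al * (INR a - 2 / al)).
Proof.
  intros Hl Ha Hn. pose proof PI_RGT_0. pose proof (two_div_lt_1 al Ha).
  assert (1 <= INR a) by (apply (le_INR 1); auto).
  apply Rdiv_lt_0_compat; [nra | apply Rmult_lt_0_compat; lra].
Qed.

Lemma bias_coef_nonneg T al a : 1 <= T -> 2 < al -> (1 <= a)%nat ->
  0 <= 1 - rpow T (- (INR a - 2 / al)).
Proof.
  intros HT Ha Hn. pose proof (two_div_lt_1 al Ha).
  assert (1 <= INR a) by (apply (le_INR 1); auto).
  pose proof (rpow_le_1 T (- (INR a - 2 / al)) HT ltac:(lra)). lra.
Qed.

Section BGen.

Variables (p : params) (Pj aj Tj : R) (fY : R -> R) (Nj Uj : nat) (Qj : R).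
Hypotheses (Hp : model_hyp p) (HPj : 0 < Pj) (Haj : 0 < aj) (HTj : 1 <= Tj)
  (moment_pos : forall s, 0 <= s -> 0 < Iinf (fun y => rpow y s * fY y)).

Lemma moment_exponent_nonneg (i j : nat) : 0 <= 2 * aj / al1 p * INR i + 2 * aj / al2 p * INR j.
Proof.
  destruct Hp as (_ & _ & Ha1 & Ha2 & _).
  apply Rplus_le_le_0_compat; apply Rmult_le_pos; try apply pos_INR; apply Rdiv_le_0_compat; lra.
Qed.

Lemma coef1_nonneg pc a : 0 <= pc -> (1 <= a)%nat ->
  0 <= 2 * PI * lam1 p / (al1 p * (INR a - 2 / al1 p)) * rpow (P1 p / Pj) (2 / al1 p) * pc
       * (1 - rpow Tj (- (INR a - 2 / al1 p))).
Proof.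
  intros Hpc Ha. destruct Hp as (_ & _ & Ha1 & _ & Hl1 & _).
  pose proof (tier_coef_pos _ _ a Hl1 Ha1 Ha). pose proof (rpow_nonneg (P1 p / Pj) (2 / al1 p)).
  pose proof (bias_coef_nonneg Tj (al1 p) a HTj Ha1 Ha).
  apply Rmult_le_pos; [apply Rmult_le_pos; [apply Rmult_le_pos|]|]; lra.
Qed.

Lemma b_gen_le U U' : 0 <= Qj -> 0 <= pcbar p U' <= pcbar p U ->
  b_gen p Pj aj Tj fY Nj Uj Qj U' <= b_gen p Pj aj Tj fY Nj Uj Qj U.
Proof.
  intros HQ [Hpc Hpc']. pose proof Hp as (HP1 & HP2 & Ha1 & Ha2 & Hl1 & Hl2 & _).
  unfold b_gen. apply Rmult_le_compat_l; auto.
  apply lsum_le; intros [[n1 n2] n3] _.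
  apply lsum_le; intros m _; apply lsum_le; intros pp _; apply lsum_le; intros q _.
  set (I := Iinf _).
  assert (HI : 0 <= I) by (left; apply moment_pos, moment_exponent_nonneg).
  set (B := pprod_from 1 _ pp). set (C := pprod_from 1 _ q).
  assert (0 <= B).
  { apply pprod_nonneg. intros a Ha. pose proof (tier_coef_pos _ _ a Hl1 Ha1 Ha).
    apply Rmult_le_pos; [apply Rmult_le_pos; [lra|] |]; apply rpow_nonneg. }
  assert (0 <= C).
  { apply pprod_nonneg. intros a Ha. pose proof (tier_coef_pos _ _ a Hl2 Ha2 Ha).
    apply Rmult_le_pos; [lra | apply rpow_nonneg]. }
  apply Rmult_le_compat_r; auto. apply Rmult_le_compat_r; auto. apply Rmult_le_compat_l; auto.
  apply pprod_le. intros a Ha. split; [apply coef1_nonneg; auto|].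
  pose proof (tier_coef_pos _ _ a Hl1 Ha1 Ha). pose proof (rpow_nonneg (P1 p / Pj) (2 / al1 p)).
  pose proof (bias_coef_nonneg Tj (al1 p) a HTj Ha1 Ha).
  apply Rmult_le_compat_r; auto. apply Rmult_le_compat_l; auto. apply Rmult_le_pos; lra.
Qed.

(* All summands are nonnegative, and those with [n1 = n2 = 0] are positive. *)
Lemma b_gen_pos U : 0 < Qj -> 0 <= pcbar p U -> 0 < b_gen p Pj aj Tj fY Nj Uj Qj U.
Proof.
  intros HQ Hpc. pose proof Hp as (HP1 & HP2 & Ha1 & Ha2 & Hl1 & Hl2 & _).
  unfold b_gen. apply Rmult_lt_0_compat; auto.
  set (c1 := fun a : nat => _). set (c2 := fun a : nat => _). set (c3 := fun a : nat => _).
  set (I := fun m pp q : list nat => Iinf (fun y => rpow y (2 * aj / al1 p * INR (sumn m + sumn pp)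
                                          + 2 * aj / al2 p * INR (sumn q)) * fY y)).
  assert (HI : forall m pp q, 0 < I m pp q) by (intros; apply moment_pos, moment_exponent_nonneg).
  assert (Hc1 : forall a, (1 <= a)%nat -> 0 <= c1 a) by (intros; apply coef1_nonneg; auto).
  assert (Hc2 : forall a, (1 <= a)%nat -> 0 < c2 a).
  { intros a Ha. apply Rmult_lt_0_compat; [apply Rmult_lt_0_compat; [apply tier_coef_pos; auto|]|];
      apply rpow_pos; try apply Rdiv_lt_0_compat; lra. }
  assert (Hc3 : forall a, (1 <= a)%nat -> 0 < c3 a).
  { intros a Ha. apply Rmult_lt_0_compat; [apply tier_coef_pos; auto|].
    apply rpow_pos, Rdiv_lt_0_compat; lra. }
  assert (Hnn : forall m pp q,
    0 <= I m pp q * pprod_from 1 c1 m * pprod_from 1 c2 pp * pprod_from 1 c3 q).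
  { intros m pp q. pose proof (HI m pp q). pose proof (pprod_nonneg 1 c1 m Hc1).
    pose proof (pprod_pos 1 c2 pp Hc2). pose proof (pprod_pos 1 c3 q Hc3).
    apply Rmult_le_pos; [apply Rmult_le_pos; [apply Rmult_le_pos|]|]; lra. }
  apply lsum_pos.
  - intros [[n1 n2] n3] _.
    apply lsum_nonneg; intros m _; apply lsum_nonneg; intros pp _; apply lsum_nonneg; intros q _.
    exact (Hnn m pp q).
  - exists (0%nat, 0%nat, (Nj - Uj)%nat). split; [apply in_Nset_00n|]. simpl; rewrite !Rplus_0_r.
    apply lsum_pos; [intros q _; exact (Hnn [] [] q)|].
    destruct (Mset_nonempty (Nj - Uj)) as [q Hq]. exists q. split; auto.
    simpl pprod_from. rewrite !Rmult_1_r.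
    apply Rmult_lt_0_compat; [exact (HI [] [] q) | exact (pprod_pos 1 c3 q Hc3)].
Qed.

End BGen.

Section Tiers.

Variable p : params.
Hypothesis Hp : model_hyp p.

Lemma moment_fY1_pos s : 0 <= s -> 0 < Iinf (fun y => rpow y s * fY1 p y).
Proof.
  intros Hs. pose proof (A1_pos p Hp) as HA.
  destruct Hp as (HP1 & HP2 & Ha1 & Ha2 & Hl1 & Hl2 & _). pose proof PI_RGT_0.
  rewrite fY1_eq. apply Iinf_moment_gauss_shape_pos; auto.
  - left; apply Rdiv_lt_0_compat; nra.
  - apply Rmult_le_pos; [lra | apply rpow_nonneg].
  - apply Rdiv_lt_0_compat; lra.
  - apply Rdiv_lt_0_compat; nra.
Qed.

Lemma moment_fY2_pos s : 0 <= s -> 0 < Iinf (fun y => rpow y s * fY2 p y).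
Proof.
  intros Hs. pose proof (A2_pos p Hp) as HA.
  destruct Hp as (HP1 & HP2 & Ha1 & Ha2 & Hl1 & Hl2 & _). pose proof PI_RGT_0.
  rewrite fY2_eq. apply Iinf_moment_gauss_shape_pos; auto.
  - left; apply Rdiv_lt_0_compat; nra.
  - apply Rmult_le_pos; [lra | apply rpow_nonneg].
  - apply Rdiv_lt_0_compat; lra.
  - apply Rdiv_lt_0_compat; nra.
Qed.

Lemma b2_antitone U V : 0 <= Lbar p -> (U <= V)%nat -> b2 p V <= b2 p U.
Proof.
  intros HL HUV. pose proof Hp as (HP1 & HP2 & Ha1 & Ha2 & _ & _ & HT1 & HT2).
  apply b_gen_le; auto; try lra.
  - apply moment_fY2_pos.
  - split; [apply pcbar_nonneg | apply pcbar_antitone]; auto.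
Qed.

Lemma b1_pos U : 0 < Lbar p -> 0 < b1 p U.
Proof.
  intros HL. pose proof Hp as (HP1 & HP2 & Ha1 & Ha2 & _ & _ & HT1 & HT2).
  apply b_gen_pos; auto; try lra.
  - apply moment_fY1_pos.
  - apply Q1_pos; auto.
  - apply pcbar_nonneg; lra.
Qed.

End Tiers.

Lemma b_below p U : (U < N1 p - N2 p)%nat -> b p U = A2 p * b2 p U.
Proof. intros H. unfold b. apply Nat.ltb_lt in H. rewrite H. reflexivity. Qed.

Lemma b_at p : b p (N1 p - N2 p) = A1 p * b1 p (N1 p - N2 p) + A2 p * b2 p (N1 p - N2 p).
Proof. unfold b. rewrite Nat.ltb_irrefl, Nat.eqb_refl. reflexivity. Qed.

Lemma b_above p U : (N1 p - N2 p < U)%nat -> b p U = A1 p * b1 p U.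
Proof.
  intros H. unfold b.
  replace (Nat.ltb U (N1 p - N2 p)) with false by (symmetry; apply Nat.ltb_ge; lia).
  replace (Nat.eqb U (N1 p - N2 p)) with false by (symmetry; apply Nat.eqb_neq; lia).
  reflexivity.
Qed.

(* On [U <= N1 - N2] only tier 2 contributes below the threshold, and there [b] decreases in [U]. *)
Lemma b_Ustar_le p U : model_hyp p -> 0 <= Lbar p -> (N2 p < N1 p)%nat ->
  (U <= N1 p - N2 p)%nat -> b p (Ustar p) <= b p U.
Proof.
  intros Hp HL HN HU. pose proof (A2_pos p Hp) as HA2.
  set (d := (N1 p - N2 p)%nat) in *.
  assert (Hd1 : b p (d - 1) = A2 p * b2 p (d - 1)) by (apply b_below; unfold d; lia).
  assert (Hmono : U <> d -> A2 p * b2 p (d - 1) <= b p U).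
  { intros Hne. rewrite b_below by (unfold d in *; lia).
    apply Rmult_le_compat_l; [lra | apply b2_antitone; auto; lia]. }
  assert (Hd : b p d = A1 p * b1 p d + A2 p * b2 p d) by apply b_at.
  unfold Ustar. fold d. rewrite <- Hd.
  destruct (Rlt_dec _ _) as [Hlt | Hge]; destruct (Nat.eq_dec U d) as [-> | Hne].
  - lra.
  - rewrite Hd1. auto.
  - lra.
  - specialize (Hmono Hne). lra.
Qed.

Lemma Ustar_cases p : Ustar p = (N1 p - N2 p - 1)%nat \/ Ustar p = (N1 p - N2 p)%nat.
Proof. unfold Ustar. destruct (Rlt_dec _ _); auto. Qed.

(** * Small-beta minimisation *)

Lemma finite_pos_lower_bound (f : nat -> R) (P : nat -> Prop) n :
  (forall U, (U <= n)%nat -> P U -> 0 < f U) ->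
  exists m, 0 < m /\ forall U, (U <= n)%nat -> P U -> m <= f U.
Proof.
  induction n as [|n IH]; intros H.
  - destruct (classic (P 0%nat)) as [HP | HP].
    + exists (f 0%nat). split; [apply H; auto|]. intros U HU _. replace U with 0%nat by lia. lra.
    + exists 1. split; [lra|]. intros U HU HPU. replace U with 0%nat in HPU by lia. contradiction.
  - destruct IH as [m [Hm Hm']]; [intros U HU; apply H; lia|].
    destruct (classic (P (S n))) as [HP | HP].
    + exists (Rmin m (f (S n))). split; [apply Rmin_pos; auto|].
      intros U HU HPU. destruct (Nat.eq_dec U (S n)) as [-> | Hne]; [apply Rmin_r|].
      eapply Rle_trans; [apply Rmin_l | apply Hm'; auto; lia].
    + exists m. split; auto. intros U HU HPU.
      destruct (Nat.eq_dec U (S n)) as [-> | Hne]; [contradiction | apply Hm'; auto; lia].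
Qed.

(* As [beta -> 0] the largest exponent wins: [u] beats every index with a smaller exponent as soon
   as [beta |b u| <= min b], and ties in the exponent are decided by the coefficients. *)
Lemma eventually_argmin_of_leading (b : nat -> R) (e : nat -> nat) (n u : nat) :
  (forall U, (U <= n)%nat -> (e U <= e u)%nat) ->
  (forall U, (U <= n)%nat -> e U = e u -> b u <= b U) ->
  (forall U, (U <= n)%nat -> (e U < e u)%nat -> 0 < b U) ->
  exists bbar, 0 < bbar /\ forall beta, 0 < beta < bbar ->
    forall U, (U <= n)%nat -> b u * beta ^ e u <= b U * beta ^ e U.
Proof.
  intros He Htie Hpos.
  destruct (finite_pos_lower_bound b (fun U => (e U < e u)%nat) n Hpos) as [m [Hm Hm']].
  set (B := Rabs (b u)).
  assert (HB : 0 <= B) by apply Rabs_pos.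
  exists (Rmin 1 (m / (B + 1))). split; [apply Rmin_pos; [lra | apply Rdiv_lt_0_compat; lra]|].
  intros beta [Hb0 Hb1] U HU.
  assert (Hb1' : beta < 1) by (eapply Rlt_le_trans; [exact Hb1 | apply Rmin_l]).
  assert (Hbm : B * beta <= m).
  { assert (beta < m / (B + 1)) by (eapply Rlt_le_trans; [exact Hb1 | apply Rmin_r]).
    apply Rle_trans with ((B + 1) * beta); [nra|].
    apply Rmult_lt_compat_l with (r := B + 1) in H; [|lra].
    replace ((B + 1) * (m / (B + 1))) with m in H by (field; lra). lra. }
  pose proof (pow_le beta (e U) ltac:(lra)) as HbU.
  destruct (Nat.eq_dec (e U) (e u)) as [Heq | Hne].
  - rewrite Heq. apply Rmult_le_compat_r; [apply pow_le; lra | apply Htie; auto].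
  - assert (Hlt : (e U < e u)%nat) by (specialize (He U HU); lia).
    replace (e u) with (S (e u - e U - 1) + e U)%nat by lia.
    rewrite pow_add, <- Rmult_assoc. apply Rmult_le_compat_r; auto.
    assert (Hsmall : 0 <= beta ^ S (e u - e U - 1) <= beta).
    { simpl. pose proof (pow_le beta (e u - e U - 1) ltac:(lra)).
      assert (beta ^ (e u - e U - 1) <= 1) by (rewrite <- (pow1 (e u - e U - 1)); apply pow_incr; lra).
      nra. }
    pose proof (Hm' U HU Hlt). assert (b u <= B) by apply Rle_abs.
    apply Rle_trans with (B * beta); [|lra].
    apply Rle_trans with (B * beta ^ S (e u - e U - 1)); [apply Rmult_le_compat_r; lra|].
    apply Rmult_le_compat_l; lra.
Qed.

Theorem lemma4 (p : params) :
  (1 <= N2 p)%nat -> (N2 p < N1 p)%nat ->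
  0 < P1 p -> 0 < P2 p -> 2 < al1 p -> 2 < al2 p ->
  0 < lam1 p -> 0 < lam2 p -> 1 <= T1 p -> 1 <= T2 p ->
  1 < Rmax (T1 p) (T2 p) ->
  exists bbar : R, 0 < bbar /\
    forall beta : R, 0 < beta < bbar ->
      (Ustar p < N1 p)%nat /\
      forall U : nat, (U <= N1 p - 1)%nat -> F p (Ustar p) beta <= F p U beta.
Proof.
  intros HN2 HN12 HP1 HP2 Ha1 Ha2 Hl1 Hl2 HT1 HT2 HT.
  assert (Hp : model_hyp p) by (repeat split; auto).
  pose proof (Lbar_pos p Hp HT) as HL.
  assert (HUs : (Ustar p <= N1 p - N2 p)%nat) by (destruct (Ustar_cases p) as [-> | ->]; lia).
  set (e := fun U => Nat.min (N1 p - U) (N2 p)).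
  assert (HeUs : e (Ustar p) = N2 p) by (unfold e; lia).
  destruct (eventually_argmin_of_leading (b p) e (N1 p - 1) (Ustar p)) as [bbar [Hbbar Hmin]].
  - intros U _. rewrite HeUs. unfold e. lia.
  - intros U _ HeU. apply b_Ustar_le; auto; [lra | unfold e in HeU; lia].
  - intros U _ HeU. rewrite b_above by (unfold e in HeU; lia).
    apply Rmult_lt_0_compat; [apply A1_pos | apply b1_pos]; auto.
  - exists bbar. split; auto. intros beta Hbeta. split; [lia|].
    intros U HU. apply Hmin; auto.
Qed.
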